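(* Let $\omega_s,R_s,R_r,L_s,L_r,L_m>0$ with $L_s>L_m$, $L_r>L_m$, $\sigma=1-\frac{L_m^2}{L_sL_r}$, let $A$, $B$ be the $4\times4$ and $4\times 2$ matrices $$A=\begin{bmatrix} -\frac{R_s}{\sigma L_s} & \omega_s & \frac{R_sL_m}{\sigma L_sL_r} & 0 \\ -\omega_s & -\frac{R_s}{\sigma L_s} & 0 & \frac{R_sL_m}{\sigma L_sL_r}\\ \frac{R_rL_m}{\sigma L_sL_r} & 0 & -\frac{R_r}{\sigma L_r} & \omega_s \\ 0 & \frac{R_rL_m}{\sigma L_sL_r} & -\omega_s & -\frac{R_r}{\sigma L_r} \end{bmatrix},\qquad B=\begin{bmatrix}0_{2\times2}\\ I_{2\times 2}\end{bmatrix},$$ and let $K\in\mathbb{R}^{2\times4}$ be such that $A-BK$ is asymptotically stable. Fix $v_{ds},v_{qs}\in\mathbb{R}$. For $u=(u_1,u_2)\in\mathbb{R}^2$ let $x(u)=-(A-BK)^{-1}[v_{ds}\;v_{qs}\;u_1\;u_2]^T$ and $T_e(u)=\frac{L_m}{\sigma L_sL_r}\big(x_1(u)x_4(u)-x_2(u)x_3(u)\big)$, and write $T_e(u)=u^TQu+b^Tu+a$ with $Q\in\mathbb{R}^{2\times2}$ symmetric, $b\in\mathbb{R}^2$, $a\in\mathbb{R}$ (this $Q$ is positive definite). Then $$a-\tfrac14\, b^TQ^{-1}b=-\frac{v_{ds}^2+v_{qs}^2}{4\omega_sR_s},$$ independently of $K$, $R_r$, $L_s$, $L_r$, $L_m$.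 Equivalently, $\min_{u\in\mathbb{R}^2}T_e(u)=-\frac{v_{ds}^2+v_{qs}^2}{4\omega_sR_s}<0$ whenever $(v_{ds},v_{qs})\neq(0,0)$.
   Context: $T_e$ models the electromagnetic torque of a doubly fed induction generator at the steady state of its electrical dynamics $\dot x=(A-BK)x+[v_{ds}\;v_{qs}\;u_1\;u_2]^T$, with $x=(\varphi_{ds},\varphi_{qs},\varphi_{dr},\varphi_{qr})$ the stator/rotor fluxes. *)

From HB Require Import structures.
From mathcomp Require Import all_boot all_order all_algebra.
Set Implicit Arguments. Unset Strict Implicit. Unset Printing Implicit Defensive.
Import Order.TTheory GRing.Theory Num.Theory.
Local Open Scope ring_scope.

Section DFIG.
Variable R : rcfType.

(* Evaluation of a real polynomial p at the complex number x + i y,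
   returned as the pair (real part, imaginary part) (Horner scheme). *)
Definition ceval (p : {poly R}) (x y : R) : R * R :=
  foldr (fun c (z : R * R) => (z.1 * x - z.2 * y + c, z.1 * y + z.2 * x))
        (0, 0) (polyseq p).

(* M is asymptotically stable (Hurwitz): every complex eigenvalue
   x + i y of M (root of its characteristic polynomial) has x < 0. *)
Definition hurwitz (n : nat) (M : 'M[R]_n) : Prop :=
  forall x y : R, ceval (char_poly M) x y = (0, 0) -> x < 0.

Definition dfig_sigma (Ls Lr Lm : R) : R := 1 - Lm ^+ 2 / (Ls * Lr).

(* The 4x4 matrix A (indices 0..3 correspond to rows/columns 1..4). *)
Definition dfig_A (ws Rs Rr Ls Lr Lm : R) : 'M[R]_4 :=
  let s := dfig_sigma Ls Lr Lm in
  \matrix_(i < 4, j < 4)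
   match nat_of_ord i, nat_of_ord j with
   | 0, 0 => - (Rs / (s * Ls))
   | 0, 1 => ws
   | 0, 2 => Rs * Lm / (s * Ls * Lr)
   | 1, 0 => - ws
   | 1, 1 => - (Rs / (s * Ls))
   | 1, 3 => Rs * Lm / (s * Ls * Lr)
   | 2, 0 => Rr * Lm / (s * Ls * Lr)
   | 2, 2 => - (Rr / (s * Lr))
   | 2, 3 => ws
   | 3, 1 => Rr * Lm / (s * Ls * Lr)
   | 3, 2 => - ws
   | 3, 3 => - (Rr / (s * Lr))
   | _, _ => 0
   end.

Definition dfig_B : 'M[R]_(4, 2) :=
  \matrix_(i < 4, j < 2) (if nat_of_ord i == (nat_of_ord j + 2)%N then 1 else 0).

Definition dfig_x (ws Rs Rr Ls Lr Lm : R) (K : 'M[R]_(2, 4)) (vds vqs : R)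
  (u : 'cV[R]_2) : 'cV[R]_4 :=
  - (invmx (dfig_A ws Rs Rr Ls Lr Lm - dfig_B *m K)
       *m \col_(i < 4) [:: vds; vqs; u 0 0; u 1 0]`_i).

Definition dfig_Te (ws Rs Rr Ls Lr Lm : R) (K : 'M[R]_(2, 4)) (vds vqs : R)
  (u : 'cV[R]_2) : R :=
  let x := dfig_x ws Rs Rr Ls Lr Lm K vds vqs u in
  Lm / (dfig_sigma Ls Lr Lm * Ls * Lr) *
    (x 0 0 * x 3 0 - x 1 0 * x 2 0).

End DFIG.

From HB Require Import structures.
From mathcomp Require Import all_boot all_order all_algebra.
From mathcomp Require Import ring lra.
Import Order.TTheory GRing.Theory Num.Theory.
Local Open Scope ring_scope.

(* The stator rows of A - BK do not depend on K, and Rs times the torque coefficient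
   Lm/(sigma Ls Lr) is their rotor coupling coefficient.  Using them to eliminate the rotor
   fluxes gives  Rs T_e = ws (x1^2 + x2^2) - vqs x1 + vds x2,  a function of the stator fluxes
   alone, whose minimum -(vds^2 + vqs^2)/(4 ws) is found by completing the square; every pair
   of stator fluxes is the steady state of some u, so this is also the minimum of Rs T_e(u).
   On the other side, Rs u^T Q u = ws |P u|^2 where P u is the stator part of x(u) - x(0), and
   P u = 0 forces u = 0, so Q is positive definite and min T_e = a - b^T Q^-1 b / 4. *)

Section QuadraticFunction.
Context {R : realFieldType} {n : nat} {Q : 'M[R]_n} {b : 'cV[R]_n} {a : R}.

Lemma quadratic_even_part {f : 'cV[R]_n -> R} :
    (forall u, f u = (u^T *m Q *m u) 0 0 + (b^T *m u) 0 0 + a) ->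
  forall u, f u + f (- u) - 2%:R * f 0 = 2%:R * (u^T *m Q *m u) 0 0.
Proof.
move=> hf u; rewrite !hf !mulmxN [(- u)^T]linearN !mulNmx trmx0 !mul0mx !mulmx0.
by rewrite !opprK !mxE; ring.
Qed.

Lemma posdef_unitmx :
  (forall u : 'cV[R]_n, u != 0 -> 0 < (u^T *m Q *m u) 0 0) -> Q \in unitmx.
Proof.
move=> posQ; apply/negPn/negP; rewrite unitmxE unitfE negbK => /det0P [v v0 vQ].
by have := posQ v^T; rewrite trmx_eq0 trmxK vQ mul0mx mxE ltxx => /(_ v0).
Qed.

Definition quadratic_vertex : 'cV[R]_n := - (2%:R^-1 *: (invmx Q *m b)).

Lemma quadratic_complete_square (u : 'cV[R]_n) :
    Q^T = Q -> Q \in unitmx ->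
  (u^T *m Q *m u) 0 0 + (b^T *m u) 0 0 + a
    = ((u - quadratic_vertex)^T *m Q *m (u - quadratic_vertex)) 0 0
      + (a - (b^T *m invmx Q *m b) 0 0 / 4%:R).
Proof.
move=> Qsym Qunit; set us := quadratic_vertex.
have tr11 (x y : 'cV[R]_n) : (x^T *m y) 0 0 = (y^T *m x) 0 0.
  by rewrite -[in LHS](trmxK y) -trmx_mul mxE.
have QusE : Q *m us = - (2%:R^-1 *: b).
  by rewrite mulmxN -scalemxAr mulmxA mulmxV // mul1mx.
have usQE : us^T *m Q = - (2%:R^-1 *: b^T).
  by rewrite -[Q]Qsym -trmx_mul QusE [LHS]linearN [in LHS]linearZ.
have usbE : (us^T *m b) 0 0 = - (2%:R^-1 * (b^T *m invmx Q *m b) 0 0).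
  by rewrite tr11 /us mulmxN -scalemxAr mulmxA !mxE.
have ubE : u^T *m b = b^T *m u by apply/matrixP => i j; rewrite !ord1 tr11.
rewrite [(u - us)^T]linearB !mulmxBl !mulmxBr -!mulmxA QusE !mulmxA usQE.
rewrite !mulmxN -!scalemxAr mulNmx -scalemxAl ubE.
set q := u^T *m Q *m u; set l := b^T *m u; set c := us^T *m b.
rewrite -/c in usbE; move: (b^T *m invmx Q *m b) usbE => d usbE.
by clearbody q l c; rewrite !mxE usbE; field.
Qed.

Lemma quadratic_min_value {f : 'cV[R]_n -> R} {m : R} {uo : 'cV[R]_n} :
    Q^T = Q -> (forall u : 'cV[R]_n, u != 0 -> 0 < (u^T *m Q *m u) 0 0) ->
    (forall u, f u = (u^T *m Q *m u) 0 0 + (b^T *m u) 0 0 + a) ->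
    (forall u, m <= f u) -> f uo = m ->
  a - (b^T *m invmx Q *m b) 0 0 / 4%:R = m.
Proof.
move=> Qsym posQ hf f_ge f_uo.
have Qunit := posdef_unitmx posQ.
have psdQ (v : 'cV[R]_n) : 0 <= (v^T *m Q *m v) 0 0.
  have [->|v0] := eqVneq v 0; last exact/ltW/posQ.
  by rewrite trmx0 !mul0mx mxE.
apply: le_anti; apply/andP; split.
  by rewrite -f_uo hf quadratic_complete_square // lerDr.
have := f_ge quadratic_vertex.
by rewrite hf quadratic_complete_square // subrr trmx0 !mul0mx mxE add0r.
Qed.

End QuadraticFunction.

Lemma ceval_real (R : rcfType) (p : {poly R}) (x : R) : ceval p x 0 = (p.[x], 0).
Proof.
rewrite /ceval /horner; elim: (polyseq p) => [|c s IH] //=.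
by rewrite IH /= !mulr0 subr0 mul0r addr0.
Qed.

Lemma hurwitz_unitmx {R : rcfType} {n : nat} {M : 'M[R]_n} :
  hurwitz M -> M \in unitmx.
Proof.
move=> hM; apply/negPn/negP; rewrite unitmxE unitfE negbK => /eqP detM0.
have := hM 0 0; rewrite ltxx ceval_real horner_coef0 char_poly_det detM0 mulr0.
by move/(_ erefl).
Qed.

Lemma dfig_sigma_gt0 {R : rcfType} {Ls Lr Lm : R} :
  0 < Lm -> Lm < Ls -> Lm < Lr -> 0 < dfig_sigma Ls Lr Lm.
Proof.
move=> hLm hLsm hLrm; have hLs := lt_trans hLm hLsm; have hLr := lt_trans hLm hLrm.
rewrite /dfig_sigma subr_gt0 ltr_pdivrMr ?mul1r ?mulr_gt0 // expr2.
exact: ltr_pM (ltW hLm) (ltW hLm) hLsm hLrm.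
Qed.

Lemma sum_ord2 (V : nmodType) (F : 'I_2 -> V) : \sum_j F j = F 0 + F 1.
Proof. by rewrite !big_ord_recl big_ord0 addr0; congr (_ + F _); apply: val_inj. Qed.

Lemma sum_ord4 (V : nmodType) (F : 'I_4 -> V) : \sum_j F j = F 0 + F 1 + F 2 + F 3.
Proof.
rewrite !big_ord_recl big_ord0 addr0 !addrA.
by congr (_ + _ + _ + _); congr F; apply: val_inj.
Qed.

Lemma col4P (T : Type) (y z : 'cV[T]_4) :
  y 0 0 = z 0 0 -> y 1 0 = z 1 0 -> y 2 0 = z 2 0 -> y 3 0 = z 3 0 -> y = z.
Proof.
move=> e0 e1 e2 e3; apply/matrixP => i j; rewrite ord1.
have /or4P : [|| i == 0, i == 1, i == 2 | i == 3] by case: i => [[|[|[|[|]]]]].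
by case=> /eqP ->.
Qed.

Definition dfig_input {R : rcfType} (vds vqs : R) (u : 'cV[R]_2) : 'cV[R]_4 :=
  \col_(i < 4) [:: vds; vqs; u 0 0; u 1 0]`_i.

Definition reduced_torque {R : rcfType} (ws vds vqs y0 y1 : R) : R :=
  ws * (y0 ^+ 2 + y1 ^+ 2) - vqs * y0 + vds * y1.

Section Dfig.
Context {R : rcfType} {ws Rs Rr Ls Lr Lm : R} {K : 'M[R]_(2, 4)} {vds vqs : R}.

Local Notation sigma := (dfig_sigma Ls Lr Lm).
Local Notation coupling := (Rs * Lm / (sigma * Ls * Lr)).
Local Notation M := (dfig_A ws Rs Rr Ls Lr Lm - dfig_B R *m K).
Local Notation x := (dfig_x ws Rs Rr Ls Lr Lm K vds vqs).
Local Notation Te := (dfig_Te ws Rs Rr Ls Lr Lm K vds vqs).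
Local Notation input := (dfig_input vds vqs).
Local Notation F := (reduced_torque ws vds vqs).

Lemma closed_loop_stator (i j : 'I_4) : (i < 2)%N -> M i j = dfig_A ws Rs Rr Ls Lr Lm i j.
Proof.
move=> i_lt2; rewrite !mxE big1 ?subr0 // => k _; rewrite mxE.
by case: eqP => [i_eq | _]; [rewrite i_eq ltnNge leq_addl in i_lt2 | rewrite mul0r].
Qed.

Lemma closed_loop_row0 (y : 'cV[R]_4) :
  (M *m y) 0 0 = - (Rs / (sigma * Ls)) * y 0 0 + ws * y 1 0 + coupling * y 2 0.
Proof. by rewrite mxE sum_ord4 !closed_loop_stator // !mxE /= mul0r addr0. Qed.

Lemma closed_loop_row1 (y : 'cV[R]_4) :
  (M *m y) 1 0 = - ws * y 0 0 - Rs / (sigma * Ls) * y 1 0 + coupling * y 3 0.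
Proof. by rewrite mxE sum_ord4 !closed_loop_stator // !mxE /=; ring. Qed.

Lemma Rs_flux_torque (y : 'cV[R]_4) :
  Rs * (Lm / (sigma * Ls * Lr) * (y 0 0 * y 3 0 - y 1 0 * y 2 0))
    = ws * (y 0 0 ^+ 2 + y 1 0 ^+ 2) + y 0 0 * (M *m y) 1 0 - y 1 0 * (M *m y) 0 0.
Proof. by rewrite closed_loop_row0 closed_loop_row1; ring. Qed.

Lemma reduced_torque_square (y0 y1 : R) : ws != 0 ->
  F y0 y1 = ws * ((y0 - vqs / (2%:R * ws)) ^+ 2 + (y1 + vds / (2%:R * ws)) ^+ 2)
            - (vds ^+ 2 + vqs ^+ 2) / (4%:R * ws).
Proof. by move=> ws_neq0; rewrite /reduced_torque; field. Qed.

Hypothesis M_unit : M \in unitmx.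

Lemma dfig_xE u : x u = - (invmx M *m input u).
Proof. by []. Qed.

Lemma dfig_xP u : M *m x u = - input u.
Proof. by rewrite mulmxN mulmxA mulmxV // mul1mx. Qed.

Lemma Rs_dfig_Te u : Rs * Te u = F (x u 0 0) (x u 1 0).
Proof.
rewrite [Rs * _]Rs_flux_torque dfig_xP !mxE /=.
by rewrite /reduced_torque; ring.
Qed.

Lemma dfig_inputK (w : 'cV[R]_4) :
  w 0 0 = vds -> w 1 0 = vqs -> input (\col_(i < 2) [:: w 2 0; w 3 0]`_i) = w.
Proof. by move=> w0 w1; apply: col4P; rewrite !mxE. Qed.

Lemma dfig_x_onto (y : 'cV[R]_4) :
  (M *m y) 0 0 = - vds -> (M *m y) 1 0 = - vqs -> exists u, x u = y.
Proof.
move=> My0 My1; exists (\col_(i < 2) [:: (- (M *m y)) 2 0; (- (M *m y)) 3 0]`_i).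
rewrite dfig_xE dfig_inputK; last 2 first.
- by rewrite [LHS]mxE My0 opprK.
- by rewrite [LHS]mxE My1 opprK.
by rewrite mulmxN opprK mulmxA mulVmx // mul1mx.
Qed.

Lemma dfig_x_stator_onto (y0 y1 : R) :
  coupling != 0 -> exists u, x u 0 0 = y0 /\ x u 1 0 = y1.
Proof.
set a1 := Rs / (sigma * Ls); set g := coupling => g_neq0.
pose y := \col_(i < 4)
  [:: y0; y1; (a1 * y0 - ws * y1 - vds) / g; (ws * y0 + a1 * y1 - vqs) / g]`_i.
have [u xu] : exists u, x u = y.
  by apply: dfig_x_onto; rewrite ?closed_loop_row0 ?closed_loop_row1 !mxE /= -/a1 -/g; field.
by exists u; rewrite xu !mxE.
Qed.

Local Notation Te_min := (- ((vds ^+ 2 + vqs ^+ 2) / (4%:R * ws * Rs))).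

Lemma dfig_Te_ge u : 0 < ws -> 0 < Rs -> Te_min <= Te u.
Proof.
move=> ws_gt0 Rs_gt0.
rewrite -(ler_pM2l Rs_gt0) Rs_dfig_Te reduced_torque_square ?gt_eqF //.
have -> : Rs * Te_min = - ((vds ^+ 2 + vqs ^+ 2) / (4%:R * ws)).
  by field; rewrite !gt_eqF.
rewrite -[X in X <= _]add0r lerD2r.
by rewrite mulr_ge0 ?addr_ge0 ?sqr_ge0 ?ltW.
Qed.

Lemma dfig_Te_attains : ws != 0 -> Rs != 0 -> coupling != 0 -> exists u, Te u = Te_min.
Proof.
move=> ws_neq0 Rs_neq0 coupling_neq0.
have [u [xu0 xu1]] := dfig_x_stator_onto (vqs / (2%:R * ws)) (- vds / (2%:R * ws)) coupling_neq0.
exists u; apply: (mulfI Rs_neq0).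
by rewrite Rs_dfig_Te xu0 xu1 reduced_torque_square //; field; rewrite ws_neq0 Rs_neq0.
Qed.

Lemma dfig_input_affine u : input u = input 0 + dfig_B R *m u.
Proof. by apply: col4P; rewrite !mxE !sum_ord2 !mxE /=; ring. Qed.

Lemma dfig_x_affine u : x u = x 0 - invmx M *m (dfig_B R *m u).
Proof. by rewrite !dfig_xE [input u]dfig_input_affine mulmxDr opprD. Qed.

Lemma Rs_dfig_Te_even u (p := invmx M *m (dfig_B R *m u)) :
  Rs * (Te u + Te (- u) - 2%:R * Te 0) = 2%:R * ws * (p 0 0 ^+ 2 + p 1 0 ^+ 2).
Proof.
rewrite mulrBr mulrDr [Rs * (2%:R * _)]mulrCA !Rs_dfig_Te.
rewrite (dfig_x_affine u) (dfig_x_affine (- u)).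
rewrite !mulmxN opprK -/p; move: (x 0) p => c q.
by rewrite !mxE /reduced_torque; ring.
Qed.

Lemma dfig_response_stator_eq0 (u : 'cV[R]_2) (p := invmx M *m (dfig_B R *m u)) :
  coupling != 0 -> p 0 0 = 0 -> p 1 0 = 0 -> u = 0.
Proof.
move=> coupling_neq0 p0 p1.
have Bu i : (dfig_B R *m u) i 0 = input u i 0 - input 0 i 0.
  by rewrite (dfig_input_affine u) [in RHS]mxE addrC addrK.
have Mp : M *m p = dfig_B R *m u by rewrite mulmxA mulmxV // mul1mx.
have p2 : p 2 0 = 0.
  apply: (mulfI coupling_neq0); rewrite mulr0.
  by move: (closed_loop_row0 p); rewrite Mp Bu p0 p1 !mxE subrr; lra.
have p3 : p 3 0 = 0.
  apply: (mulfI coupling_neq0); rewrite mulr0.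
  by move: (closed_loop_row1 p); rewrite Mp Bu p0 p1 !mxE subrr; lra.
have Bu0 : dfig_B R *m u = 0.
  by rewrite -Mp (_ : p = 0) ?mulmx0 //; apply: col4P; rewrite ?p0 ?p1 ?p2 ?p3 mxE.
apply/matrixP => i j; rewrite ord1 [RHS]mxE.
have /orP [] : (i == 0) || (i == 1) by case: i => [[|[|]]].
- by move=> /eqP ->; move: (Bu 2); rewrite Bu0 !mxE /= subr0.
- by move=> /eqP ->; move: (Bu 3); rewrite Bu0 !mxE /= subr0.
Qed.

Lemma dfig_quadratic_posdef {Q : 'M[R]_2} {b : 'cV[R]_2} {a : R} :
    0 < ws -> 0 < Rs -> coupling != 0 ->
    (forall u, Te u = (u^T *m Q *m u) 0 0 + (b^T *m u) 0 0 + a) ->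
  forall u : 'cV[R]_2, u != 0 -> 0 < (u^T *m Q *m u) 0 0.
Proof.
move=> ws_gt0 Rs_gt0 coupling_neq0 hrep u u_neq0.
rewrite -(pmulr_rgt0 _ Rs_gt0) -(pmulr_rgt0 _ (ltr0Sn R 1)) mulrCA.
rewrite -(quadratic_even_part hrep) Rs_dfig_Te_even pmulr_rgt0 ?mulr_gt0 ?ltr0Sn //.
set p := invmx M *m _.
rewrite lt_def paddr_eq0 ?sqr_ge0 // !sqrf_eq0 addr_ge0 ?sqr_ge0 // andbT.
apply/negP => /andP [/eqP p0 /eqP p1].
by move/eqP: u_neq0; apply; apply: dfig_response_stator_eq0.
Qed.

End Dfig.

Theorem mainTheorem2 (R : rcfType) (ws Rs Rr Ls Lr Lm : R)
  (hws : 0 < ws) (hRs : 0 < Rs) (hRr : 0 < Rr) (hLs : 0 < Ls) (hLr : 0 < Lr)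
  (hLm : 0 < Lm) (hLsm : Lm < Ls) (hLrm : Lm < Lr)
  (K : 'M[R]_(2, 4))
  (hK : hurwitz (dfig_A ws Rs Rr Ls Lr Lm - dfig_B R *m K))
  (vds vqs : R) (Q : 'M[R]_2) (b : 'cV[R]_2) (a : R)
  (hQsym : Q^T = Q)
  (hrep : forall u : 'cV[R]_2,
     dfig_Te ws Rs Rr Ls Lr Lm K vds vqs u
       = (u^T *m Q *m u) 0 0 + (b^T *m u) 0 0 + a) :
  (forall u : 'cV[R]_2, u != 0 -> 0 < (u^T *m Q *m u) 0 0) /\
  a - (b^T *m invmx Q *m b) 0 0 / 4%:R
    = - ((vds ^+ 2 + vqs ^+ 2) / (4%:R * ws * Rs)).
Proof.
have M_unit := hurwitz_unitmx hK.
have coupling_neq0 : Rs * Lm / (dfig_sigma Ls Lr Lm * Ls * Lr) != 0.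
  have sigma_gt0 := dfig_sigma_gt0 hLm hLsm hLrm.
  by rewrite gt_eqF // !(divr_gt0, mulr_gt0).
have posQ := dfig_quadratic_posdef M_unit hws hRs coupling_neq0 hrep.
split=> //.
have [uo Te_uo] := dfig_Te_attains (vds := vds) (vqs := vqs) M_unit
  (lt0r_neq0 hws) (lt0r_neq0 hRs) coupling_neq0.
exact: (quadratic_min_value hQsym posQ hrep (fun u => dfig_Te_ge M_unit u hws hRs) Te_uo).
Qed.
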